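(* For every $n\geq1$ and every $i\in\{1,\dots,N\}$, $$C^{(n+1)}_{ii}\cdot v=\lambda_i\, C^{(n)}_{ii}\cdot v-G_i\,C^{(n)}_{-i,i}\cdot v-\sum_{k\in I,\ |k|>i}C^{(n)}_{kk}\cdot v.$$
   Context: Let $N\geq1$, $I=\{-N,\dots,-1,1,\dots,N\}$, and for $k\in I$ put $\bar k=0$ if $k>0$, $\bar k=1$ if $k<0$. The Lie superalgebra $\mathfrak{q}(N)$ over $\mathbb{C}$ is spanned by elements $F_{ij}$ ($i,j\in I$) with $F_{-i,-j}=F_{ij}$ (realized as $F_{ij}=E_{ij}+E_{-i,-j}\in\mathfrak{gl}(N|N)$), $F_{ij}$ of parity $\bar\imath+\bar\jmath\bmod 2$, and supercommutator $$[F_{ij}, F_{kl}] = \delta_{kj} F_{il} - (-1)^{(\bar{\imath}+ \bar{\jmath})(\bar{k} + \bar{l})} \delta_{il} F_{kj} + \delta_{k,-j} F_{-i,l} - (-1)^{(\bar{\imath} + \bar{\jmath})(\bar{k} + \bar{l})} \delta_{-i,l} F_{k,-j}.$$ For $n\geq1$ define $C^{(n)}_{ij}\in U(\mathfrak{q}(N))$ by $$C^{(n)}_{ij} = \sum_{k_1,\ldots,k_{n-1}\in I}F_{ik_1} (-1)^{\bar{k}_1} F_{k_1k_2} (-1)^{\bar{k}_2} \cdots F_{k_{n-2}k_{n-1}} (-1)^{\bar{k}_{n-1}} F_{k_{n-1}j}$$ (so $C^{(1)}_{ij}=F_{ij}$). For $i>0$ let $G_i=F_{-i,i}$ $(=F_{i,-i})$.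 Let $V$ be a representation of $\mathfrak{q}(N)$ and $v\in V$ a vector such that $F_{ij}\cdot v=0$ whenever $|i|<|j|$, and $F_{ii}\cdot v=\lambda_i v$ for $i=1,\dots,N$, where $\lambda_1,\dots,\lambda_N\in\mathbb{C}$. *)

From HB Require Import structures.
From mathcomp Require Import all_boot all_order all_algebra.
Set Implicit Arguments. Unset Strict Implicit. Unset Printing Implicit Defensive.
Import Order.TTheory GRing.Theory Num.Theory.
Local Open Scope ring_scope.

(* The index set I = {-N,...,-1,1,...,N} is encoded as bool * 'I_N :
   (false, a) stands for the positive index a+1, (true, a) for -(a+1). *)
Definition idx (N : nat) := (bool * 'I_N)%type.
Definition ipos N (a : 'I_N) : idx N := (false, a).
Definition ineg N (a : 'I_N) : idx N := (true, a).
Definition ibar N (k : idx N) : bool := k.1.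
Definition iopp N (k : idx N) : idx N := (~~ k.1, k.2).
Definition iabs N (k : idx N) : nat := (k.2).+1.

Definition kdelta (R : nzRingType) N (k l : idx N) : R := (k == l)%:R.

Definition qsign (R : nzRingType) N (i j k l : idx N) : R :=
  (-1) ^+ ((ibar i (+) ibar j) && (ibar k (+) ibar l)).

(* A representation of q(N) on the module V: the images rho i j of the
   spanning elements F_{ij}, linear operators on V, with F_{-i,-j} = F_{ij}
   and the supercommutator relations of q(N). *)
Definition is_qrep (R : nzRingType) (V : lmodType R) N
    (rho : idx N -> idx N -> {linear V -> V}) : Prop :=
  (forall i j, rho (iopp i) (iopp j) =1 rho i j) /\
  (forall i j k l (w : V),
     rho i j (rho k l w) - qsign R i j k l *: rho k l (rho i j w) =
       kdelta R k j *: rho i l w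
     - qsign R i j k l *: (kdelta R i l *: rho k j w)
     + kdelta R k (iopp j) *: rho (iopp i) l w
     - qsign R i j k l *: (kdelta R (iopp i) l *: rho k (iopp j) w)).

(* Cpow n i j w = C^{(n+1)}_{ij} . w  (action of the element of U(q(N))) *)
Fixpoint Cpow (R : nzRingType) (V : lmodType R) N
    (rho : idx N -> idx N -> {linear V -> V}) (n : nat) (i j : idx N) (w : V)
    : V :=
  match n with
  | 0 => rho i j w
  | n'.+1 => \sum_(k : idx N)
               rho i k ((-1) ^+ ibar k *: Cpow rho n' k j w)
  end.

(* Cact rho n i j w = C^{(n)}_{ij} . w for n >= 1 (value 0 for n = 0, unused). *)
Definition Cact (R : nzRingType) (V : lmodType R) N
    (rho : idx N -> idx N -> {linear V -> V}) (n : nat) (i j : idx N) (w : V)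
    : V :=
  match n with
  | 0 => 0
  | n'.+1 => Cpow rho n' i j w
  end.

From HB Require Import structures.
From mathcomp Require Import all_boot all_order all_algebra ring.
Import Order.TTheory GRing.Theory Num.Theory.
Local Open Scope ring_scope.

(* The entries C^(n)_cd obey the same supercommutation relations with F_ab as
   F_cd itself.  This holds for n = 1 and propagates along
   C^(n+1)_cd = sum_k F_ck (-1)^kbar C^(n)_kd by the super Leibniz rule, using
   that the supercommutator signs satisfy q(a,b,c,d) = q(a,b,c,k) q(a,b,k,d);
   the extra terms cancel in pairs.
   On the highest-weight vector v these relations give C^(n)_kl v = 0 for
   |k| < |l|, and F_ik C^(n)_ki v = C^(n)_ii v - (-1)^kbar C^(n)_kk v for
   0 < i < |k|.  In C^(n+1)_ii v = sum_k F_ik (-1)^kbar C^(n)_ki v, the term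
   k = i gives lambda_i C^(n)_ii v, the term k = -i gives -G_i C^(n)_{-i,i} v,
   the terms |k| < i vanish, and in the terms |k| > i the multiples of
   C^(n)_ii v cancel between k and -k. *)

Notation psign R k := ((-1 : R) ^+ ibar k).

Lemma iopp_neq N (k : idx N) : (iopp k == k) = false.
Proof. by case: k => [[] m]; rewrite /iopp xpair_eqE eqxx. Qed.

Lemma sum_iabs_eq (M : nmodType) N (F : idx N -> M) (i : idx N) :
  \sum_(k | iabs k == iabs i) F k = F i + F (iopp i).
Proof.
rewrite (bigD1 i) //= (bigD1 (iopp i)) /=; last by rewrite iopp_neq andbT.
rewrite big1 ?addr0 // => -[b m]; case: i => [c p].
rewrite /iopp /iabs /= eqSS !xpair_eqE => /andP[/andP[/eqP/val_inj ->]].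
by rewrite eqxx !andbT; case: b; case: c.
Qed.

Lemma sum_psign_iabs (R : nzRingType) N (P : pred nat) :
  \sum_(k : idx N | P (iabs k)) psign R k = 0.
Proof.
rewrite big_mkcond.
rewrite -(pair_bigA _ (fun b m => if P (iabs (b, m)) then psign R (b, m) else 0)) /=.
rewrite big_bool /= -big_split big1 // => m _.
by case: ifP => _; rewrite /= ?addr0 // expr1 expr0 addNr.
Qed.

Section Signs.
Context {R : comNzRingType} {N : nat}.
Implicit Types a b c d k : idx N.

Lemma qsignM a b c k d : qsign R a b c k * qsign R a b k d = qsign R a b c d.
Proof.
case: a b c k d => [[] ?] [[] ?] [[] ?] [[] ?] [[] ?];
  by rewrite /qsign /= ?(expr0, expr1, mulr1, mul1r, mulrNN).
Qed.

Lemma qsign_psign_swap a b c :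
  qsign R a b c a * psign R a = qsign R a b c b * psign R b.
Proof.
case: a b c => [[] ?] [[] ?] [[] ?];
  by rewrite /qsign /= ?(expr0, expr1, mulr1, mul1r, mulrNN).
Qed.

Lemma qsign_psign_swap_opp a b c :
  qsign R a b c (iopp a) * psign R (iopp a)
  = qsign R a b c (iopp b) * psign R (iopp b).
Proof.
case: a b c => [[] ?] [[] ?] [[] ?];
  by rewrite /qsign /= ?(expr0, expr1, mulr1, mul1r, mulrNN).
Qed.

Lemma qsign_diag a c d : qsign R a a c d = 1.
Proof. by rewrite /qsign addbb. Qed.

Lemma qsign_psign_transpose a k : qsign R a k k a * psign R k = psign R a.
Proof.
case: a k => [[] ?] [[] ?];
  by rewrite /qsign /= ?(expr0, expr1, mulr1, mul1r, mulrNN).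
Qed.

Lemma kdelta_id k : kdelta R k k = 1.
Proof. by rewrite /kdelta eqxx. Qed.

Lemma kdelta_neq k l : k != l -> kdelta R k l = 0.
Proof. by move=> /negbTE neq_kl; rewrite /kdelta neq_kl. Qed.

Lemma kdelta_iabs k l : iabs k != iabs l -> kdelta R k l = 0.
Proof. by move=> neq; apply: kdelta_neq; apply: contra neq => /eqP ->. Qed.

Lemma kdelta_opp k : kdelta R k (iopp k) = 0.
Proof. by apply: kdelta_neq; rewrite eq_sym iopp_neq. Qed.

Lemma kdelta_oppl k : kdelta R (iopp k) k = 0.
Proof. by apply: kdelta_neq; rewrite iopp_neq. Qed.

Lemma sum_scale_kdelta (V : lmodType R) (f : idx N -> R) (G : idx N -> V) a :
  \sum_k f k *: (kdelta R a k *: G k) = f a *: G a.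
Proof.
rewrite (bigD1 a) //= kdelta_id scale1r big1 ?addr0 // => k neq_ka.
by rewrite kdelta_neq ?scale0r ?scaler0 // eq_sym.
Qed.

End Signs.

Section Covariance.
Context {R : comNzRingType} {V : lmodType R} {N : nat}.
Context {rho : idx N -> idx N -> {linear V -> V}}.
Hypothesis Hrep : is_qrep rho.

Implicit Types (X : idx N -> idx N -> V -> V) (a b c d k : idx N) (w : V).

Definition qbracket X a b c d w : V :=
  kdelta R c b *: X a d w
  - qsign R a b c d *: (kdelta R a d *: X c b w)
  + kdelta R c (iopp b) *: X (iopp a) d w
  - qsign R a b c d *: (kdelta R (iopp a) d *: X c (iopp b) w).

Definition qcovariant X := forall a b c d w,
  rho a b (X c d w) - qsign R a b c d *: X c d (rho a b w) = qbracket X a b c d w.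

Definition Cstep X c d w : V := \sum_k rho c k (psign R k *: X k d w).

Lemma rho_qcomm a b c d w :
  rho a b (rho c d w) - qsign R a b c d *: rho c d (rho a b w)
  = qbracket (fun x y => rho x y) a b c d w.
Proof. exact: (proj2 Hrep). Qed.

Lemma qcovariant_summand X a b c k d w : qcovariant X ->
  rho a b (rho c k (psign R k *: X k d w))
    - qsign R a b c d *: rho c k (psign R k *: X k d (rho a b w))
  = qbracket (fun x y => rho x y) a b c k (psign R k *: X k d w)
    + qsign R a b c k *: (psign R k *: rho c k (qbracket X a b k d w)).
Proof.
move=> covX.
move/(canRL (subrK _)): (rho_qcomm a b c k (psign R k *: X k d w)) ->.
move/(canRL (subrK _)): (covX a b k d w) => covX_abkd.
rewrite [rho a b (_ *: _)]linearZ /= covX_abkd -addrA; congr (_ + _).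
move: (qbracket X a b k d w) (X k d (rho a b w)) => B Y.
rewrite -(qsignM a b c k d) !(linearZ, linearD) /= scalerDr -addrA addrC.
rewrite !scalerA scalerN.
have -> : qsign R a b c k * qsign R a b k d * psign R k
          = psign R k * qsign R a b k d * qsign R a b c k.
  by rewrite mulrC mulrA mulrAC.
by rewrite subrr add0r.
Qed.

Lemma sum_qbracket_rho X a b c d w :
  \sum_k qbracket (fun x y => rho x y) a b c k (psign R k *: X k d w)
  = kdelta R c b *: Cstep X a d w
    - (qsign R a b c a * psign R a) *: rho c b (X a d w)
    + kdelta R c (iopp b) *: Cstep X (iopp a) d w
    - (qsign R a b c (iopp a) * psign R (iopp a)) *: rho c (iopp b) (X (iopp a) d w).
Proof.
rewrite /qbracket !(big_split, sumrB) /= !sumrN -!scaler_sumr !sum_scale_kdelta.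
by rewrite !linearZ /= !scalerA.
Qed.

Lemma sum_qbracket_X X a b c d w :
  \sum_k qsign R a b c k *: (psign R k *: rho c k (qbracket X a b k d w))
  = (qsign R a b c b * psign R b) *: rho c b (X a d w)
    - qsign R a b c d *: (kdelta R a d *: Cstep X c b w)
    + (qsign R a b c (iopp b) * psign R (iopp b)) *: rho c (iopp b) (X (iopp a) d w)
    - qsign R a b c d *: (kdelta R (iopp a) d *: Cstep X c (iopp b) w).
Proof.
have collapse y (u : V) :
    \sum_k psign R k *: (kdelta R k y *: (qsign R a b c k *: rho c k u))
    = (qsign R a b c y * psign R y) *: rho c y u.
  rewrite (big_only1 y) // => [|k /kdelta_neq ->]; last by rewrite !(scale0r, scaler0).
  by rewrite kdelta_id scale1r !scalerA mulrC.
have factor e y : \sum_k psign R k *: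
      (qsign R a b c k *: (qsign R a b k d *: (e *: - rho c k (X k y w))))
    = - (qsign R a b c d *: (e *: Cstep X c y w)).
  rewrite /Cstep !scaler_sumr -sumrN; apply: eq_bigr => k _.
  rewrite [rho c k (_ *: _)]linearZ /= !scalerA !scalerN -(qsignM a b c k d).
  by congr (- (_ *: _)); ring.
rewrite /qbracket.
under eq_bigr => k _ do rewrite !(linearB, linearD, linearZ) /= !(scalerBr, scalerDr).
by rewrite !(big_split, sumrB) /= !collapse !factor.
Qed.

Lemma qcovariant_Cstep X : qcovariant X -> qcovariant (Cstep X).
Proof.
move=> covX a b c d w.
(* the terms rho c b (X a d w) and rho c (-b) (X (-a) d w) of the two sums
   cancel by [qsign_psign_swap] and [qsign_psign_swap_opp] *)
have cancel_pairs (x1 x2 x3 x4 y z : V) :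
    x1 - y + x3 - z + (y - x2 + z - x4) = x1 - x2 + x3 - x4.
  rewrite !addrA (addrAC (x1 - y + x3)) (addrAC (x1 - y)) subrK.
  by rewrite (addrAC (x1 + x3 - z)) subrK (addrAC x1).
rewrite [Cstep X c d w]/Cstep [Cstep X c d (rho a b w)]/Cstep.
rewrite linear_sum scaler_sumr -sumrB.
under eq_bigr => k _ do rewrite qcovariant_summand //.
rewrite big_split /= sum_qbracket_rho sum_qbracket_X.
by rewrite qsign_psign_swap qsign_psign_swap_opp cancel_pairs.
Qed.

Lemma CpowZ n c d (e : R) w : Cpow rho n c d (e *: w) = e *: Cpow rho n c d w.
Proof.
elim: n c d => [|n IHn] c d /=; first exact: linearZ.
rewrite scaler_sumr; apply: eq_bigr => k _.
by rewrite IHn scalerA mulrC -scalerA linearZ.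
Qed.

Lemma Cpow0 n c d : Cpow rho n c d 0 = 0.
Proof. by rewrite -[0 in LHS](scale0r 0) CpowZ scale0r. Qed.

Lemma qcovariant_Cpow n : qcovariant (Cpow rho n).
Proof. by elim: n => [|n]; [exact: rho_qcomm | exact: qcovariant_Cstep]. Qed.

Lemma rho_Cpow_annihilated n a b c d w : rho a b w = 0 ->
  rho a b (Cpow rho n c d w) = qbracket (Cpow rho n) a b c d w.
Proof. by move=> rho_w; rewrite -(qcovariant_Cpow n) rho_w Cpow0 scaler0 subr0. Qed.

Lemma rho_Cpow_diag n i w : rho i i (Cpow rho n i i w) = Cpow rho n i i (rho i i w).
Proof.
have := qcovariant_Cpow n i i i i w.
rewrite /qbracket qsign_diag kdelta_id kdelta_opp kdelta_oppl.
rewrite !(scale1r, scale0r, scaler0) subrr add0r subr0.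
by move=> /eqP; rewrite subr_eq0 => /eqP.
Qed.

Section HighestWeight.
Context {v : V}.
Hypothesis Hup : forall i j, (iabs i < iabs j)%N -> rho i j v = 0.

Lemma Cpow_lower_vanish n k l : (iabs k < iabs l)%N -> Cpow rho n k l v = 0.
Proof.
elim: n k l => [|n IHn] k l lt_kl; first exact: Hup.
rewrite /=; apply: big1 => m _.
have [lt_ml | le_lm] := ltnP (iabs m) (iabs l); first by rewrite IHn // scaler0 linear0.
rewrite linearZ /= rho_Cpow_annihilated; last exact: Hup (leq_trans lt_kl le_lm).
have neq_kl : iabs k != iabs l by rewrite neq_ltn lt_kl.
rewrite /qbracket IHn // kdelta_opp.
rewrite (kdelta_iabs k l neq_kl) (kdelta_iabs (iopp k) l neq_kl).
by rewrite !(scale0r, scaler0, subr0, addr0).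
Qed.

Lemma rho_Cpow_upper n i k : (iabs i < iabs k)%N ->
  rho i k (psign R k *: Cpow rho n k i v)
  = psign R k *: Cpow rho n i i v - psign R i *: Cpow rho n k k v.
Proof.
move=> lt_ik; rewrite linearZ /= rho_Cpow_annihilated ?Hup // /qbracket.
rewrite !kdelta_id kdelta_opp kdelta_oppl !(scale1r, scale0r, scaler0) addr0 subr0.
by rewrite scalerBr scalerA mulrC qsign_psign_transpose.
Qed.

Lemma sum_rho_Cpow_offdiag n i :
  \sum_(k | iabs k != iabs i) rho i k (psign R k *: Cpow rho n k i v)
  = \sum_(k | (iabs i < iabs k)%N)
      (psign R k *: Cpow rho n i i v - psign R i *: Cpow rho n k k v).
Proof.
rewrite big_mkcond [RHS]big_mkcond; apply: eq_bigr => k _.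
case: ltngtP => [lt_ik | lt_ki | _] //=.
- exact: rho_Cpow_upper.
- by rewrite Cpow_lower_vanish // scaler0 linear0.
Qed.

End HighestWeight.
End Covariance.

Theorem mainTheorem5 (R : numClosedFieldType) (V : lmodType R) (N : nat)
    (rho : idx N -> idx N -> {linear V -> V})
    (Hrep : is_qrep rho)
    (lambda : 'I_N -> R) (v : V)
    (Hup : forall i j : idx N, (iabs i < iabs j)%N -> rho i j v = 0)
    (Hwt : forall a : 'I_N, rho (ipos a) (ipos a) v = lambda a *: v) :
  forall (n : nat) (a : 'I_N), (1 <= n)%N ->
    Cact rho n.+1 (ipos a) (ipos a) v =
      lambda a *: Cact rho n (ipos a) (ipos a) v
      - rho (ineg a) (ipos a) (Cact rho n (ineg a) (ipos a) v)
      - \sum_(k : idx N | (iabs (ipos a) < iabs k)%N) Cact rho n k k v.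
Proof.
case=> [|n] a // _; rewrite /Cact; set i := ipos a.
rewrite [Cpow _ n.+1 _ _ _]/= (bigID (fun k => iabs k == iabs i)) /= sum_iabs_eq.
rewrite (sum_rho_Cpow_offdiag Hrep Hup) sumrB -scaler_suml -scaler_sumr.
rewrite sum_psign_iabs scale0r sub0r expr0 !scale1r.
have -> : rho i i (Cpow rho n i i v) = lambda a *: Cpow rho n i i v.
  by rewrite (rho_Cpow_diag Hrep) Hwt CpowZ.
by rewrite expr1 scaleN1r linearN /= -(proj1 Hrep (ineg a) i).
Qed.
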